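(* Let $p<0$ and $q\in\mathbb{R}$. Then any two elements of $\mathcal{A}_{p,q}^{-} = \{A\in S(4,\mathbb{R}) : \operatorname{Pf}(A) = p,\ \operatorname{s}(A) = q\}$ are equivalent under the action $\rho$, i.e. for any $A,B\in\mathcal{A}_{p,q}^{-}$ there is $P\in\operatorname{Sp}(4)$ with $B = P^TAP$.
   Context: $S(4,\mathbb{R})$ is the set of invertible skew-symmetric real $4\times4$ matrices; $J = \operatorname{diag}(J_0,J_0)$ with $J_0 = \begin{bmatrix} 0 & 1 \\ -1 & 0\end{bmatrix}$; $\operatorname{Sp}(4) = \{P : P^TJP = J\}$; $\rho(P,A) = P^TAP$. For $A = \begin{bmatrix} 0 & a & b & c \\ -a & 0 & d & e \\ -b & -d & 0 & f \\ -c & -e & -f & 0\end{bmatrix}$, $\operatorname{Pf}(A) = af-be+cd$ and $\operatorname{s}(A) = a+f$. *)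

From mathcomp Require Import all_boot all_order all_algebra.
From mathcomp Require Import reals.
Set Implicit Arguments. Unset Strict Implicit. Unset Printing Implicit Defensive.
Import Order.TTheory GRing.Theory Num.Theory.
Local Open Scope ring_scope.

(* Indices 0..3 of 'I_4 correspond to indices 1..4 of the paper. *)
Definition i0 : 'I_4 := @Ordinal 4 0 erefl.
Definition i1 : 'I_4 := @Ordinal 4 1 erefl.
Definition i2 : 'I_4 := @Ordinal 4 2 erefl.
Definition i3 : 'I_4 := @Ordinal 4 3 erefl.

Definition skew (R : realType) (A : 'M[R]_4) : Prop := A^T = - A.

Definition S4 (R : realType) (A : 'M[R]_4) : Prop := skew A /\ A \in unitmx.

(* J = diag(J0, J0), J0 = [[0,1],[-1,0]] *)
Definition Jmx (R : realType) : 'M[R]_4 :=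
  \matrix_(i < 4, j < 4)
    (if ((i == i0) && (j == i1)) || ((i == i2) && (j == i3)) then 1
     else if ((i == i1) && (j == i0)) || ((i == i3) && (j == i2)) then -1
     else 0).

Definition Sp4 (R : realType) (P : 'M[R]_4) : Prop := P^T *m Jmx R *m P = Jmx R.

(* For A = [[0,a,b,c],[-a,0,d,e],[-b,-d,0,f],[-c,-e,-f,0]]:
   a = A 0 1, b = A 0 2, c = A 0 3, d = A 1 2, e = A 1 3, f = A 2 3. *)
Definition Pf (R : realType) (A : 'M[R]_4) : R :=
  A i0 i1 * A i2 i3 - A i0 i2 * A i1 i3 + A i0 i3 * A i1 i2.

Definition sfun (R : realType) (A : 'M[R]_4) : R := A i0 i1 + A i2 i3.

Definition Aminus (R : realType) (p q : R) (A : 'M[R]_4) : Prop :=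
  S4 A /\ Pf A = p /\ sfun A = q.

From mathcomp Require Import all_boot all_order all_algebra.
From mathcomp Require Import reals ring lra.
Set Implicit Arguments. Unset Strict Implicit. Unset Printing Implicit Defensive.
Import Order.TTheory GRing.Theory Num.Theory.
Local Open Scope ring_scope.

(* For skew-symmetric A, the operator L = J^T A = J^-1 A satisfies
   L^2 = s(A) L - Pf(A), so when Pf(A) = p < 0 it has two distinct real
   eigenvalues l1, l2, the roots of t^2 - q t + p, and A x = l J x on its
   l-eigenspace.  These eigenspaces are orthogonal for w(x, y) = x^T J y and each
   contains a pair (u, v) with w(u, v) = 1.  The resulting symplectic basis
   (u1, v1, u2, v2) brings A to J diag(l1, l1, l2, l2), a normal form that only
   depends on (p, q). *)

Section BilinearForm.
Variables (R : comPzRingType) (n : nat).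
Implicit Types (M : 'M[R]_n) (x y z : 'cV[R]_n).

Definition bform M x y : R := (x^T *m M *m y) 0 0.

Lemma bformDr M x y z : bform M x (y + z) = bform M x y + bform M x z.
Proof. by rewrite /bform mulmxDr mxE. Qed.

Lemma bformZr M x y c : bform M x (c *: y) = c * bform M x y.
Proof. by rewrite /bform -scalemxAr mxE. Qed.

Lemma bform_skew M x y : M^T = - M -> bform M y x = - bform M x y.
Proof.
move=> skM; have trmx1E (N : 'M[R]_1) : N 0 0 = N^T 0 0 by rewrite mxE.
by rewrite /bform trmx1E !trmx_mul trmxK skM mulNmx mulmxN mulmxA mxE.
Qed.

Lemma mulmx_bform (P M : 'M[R]_n) i j :
  (P^T *m M *m P) i j = bform M (col i P) (col j P).
Proof.
rewrite /bform !mxE; apply: eq_bigr => k _; rewrite !mxE; congr (_ * _).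
by apply: eq_bigr => l _; rewrite !mxE.
Qed.

Lemma bform_eigen (A J : 'M[R]_n) x y l :
  A *m y = l *: (J *m y) -> bform A x y = l * bform J x y.
Proof. by move=> Ay; rewrite /bform -mulmxA Ay -scalemxAr mxE mulmxA. Qed.

End BilinearForm.

Lemma bform_alt (R : numDomainType) n (M : 'M[R]_n) x :
  M^T = - M -> bform M x x = 0.
Proof. by move=> /(bform_skew x x) /esym /eqP; rewrite eqNr => /eqP. Qed.

Lemma bform_eigen_orth (R : idomainType) n (A J : 'M[R]_n) x y a b :
  A^T = - A -> J^T = - J -> A *m x = a *: (J *m x) -> A *m y = b *: (J *m y) ->
  a != b -> bform J x y = 0.
Proof.
move=> skA skJ Ax Ay neq_ab.
have : (a - b) * bform J x y = 0.
  have := bform_skew x y skA.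
  rewrite (bform_eigen _ Ax) (bform_eigen _ Ay) (bform_skew _ _ skJ) mulrN.
  by move/oppr_inj=> E; rewrite mulrBl E subrr.
by move/eqP; rewrite mulf_eq0 subr_eq0 (negbTE neq_ab) => /eqP.
Qed.

Lemma sqnorm_cV_gt0 (R : realDomainType) n (x : 'cV[R]_n) :
  x != 0 -> 0 < (x^T *m x) 0 0.
Proof.
move=> nz_x; have sq_ge0 k : 0 <= x^T 0 k * x k 0 by rewrite mxE -expr2 sqr_ge0.
rewrite mxE lt0r sumr_ge0 ?andbT //; apply: contra nz_x => /eqP sum0.
apply/eqP/matrixP => i j; rewrite ord1 mxE.
have /eqP := psumr_eq0P (fun k _ => sq_ge0 k) sum0 (i := i) isT.
by rewrite mxE mulf_eq0 orbb => /eqP.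
Qed.

Lemma quadratic_eigvec (R : comPzRingType) n k (L : 'M[R]_n) (z : 'M[R]_(n, k)) mu nu :
  L *m L = (mu + nu) *: L - (mu * nu) *: 1%:M ->
  L *m (L *m z - nu *: z) = mu *: (L *m z - nu *: z).
Proof.
move=> sqL; rewrite mulmxBr mulmxA sqL mulmxBl -!scalemxAl mul1mx -scalemxAr.
by apply/matrixP => i j; rewrite !mxE; ring.
Qed.

Lemma mulmx_eigen_cols (R : comPzRingType) n (A J P : 'M[R]_n) (d : 'rV[R]_n) :
  (forall j, A *m col j P = d 0 j *: (J *m col j P)) -> A *m P = J *m P *m diag_mx d.
Proof.
move=> APj; apply/matrixP => i j; rewrite mul_mx_diag mxE mulrC.
have colM M : col j (M *m P) = M *m col j P by rewrite !colE mulmxA.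
have colij M : col j M i 0 = M i j by rewrite mxE.
by have /matrixP /(_ i 0) := APj j; rewrite -colM -colM [in X in _ = X]mxE !colij => ->.
Qed.

Lemma real_roots_of_neg_prod (R : rcfType) (p q : R) :
  p < 0 -> exists l1 l2 : R, l1 + l2 = q /\ l1 * l2 = p.
Proof.
move=> p_lt0; have q2_ge0 := sqr_ge0 q.
have s2 : Num.sqrt (q ^+ 2 - 4 * p) ^+ 2 = q ^+ 2 - 4 * p by rewrite sqr_sqrtr //; lra.
set s := Num.sqrt _ in s2.
exists ((q + s) / 2), ((q - s) / 2); split; first by field.
by transitivity ((q ^+ 2 - s ^+ 2) / 4); [field | rewrite s2; field].
Qed.

Lemma congr_mulmx (R : comPzRingType) n (P Q M : 'M[R]_n) :
  (P *m Q)^T *m M *m (P *m Q) = Q^T *m (P^T *m M *m P) *m Q.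
Proof. by rewrite trmx_mul !mulmxA. Qed.

Section SymplecticGroup.
Variables (R : comUnitRingType) (n : nat) (J : 'M[R]_n).
Hypothesis unitJ : J \in unitmx.
Implicit Types (P Q : 'M[R]_n).

Lemma sympl_unitmx P : P^T *m J *m P = J -> P \in unitmx.
Proof.
move=> spP; have invP : (invmx J *m P^T *m J) *m P = 1%:M.
  by rewrite -!mulmxA [P^T *m _]mulmxA spP mulVmx.
by case: (mulmx1_unit invP).
Qed.

Lemma sympl_mulmx P Q :
  P^T *m J *m P = J -> Q^T *m J *m Q = J -> (P *m Q)^T *m J *m (P *m Q) = J.
Proof. by move=> spP spQ; rewrite congr_mulmx spP. Qed.

Lemma sympl_invmx P : P^T *m J *m P = J -> (invmx P)^T *m J *m invmx P = J.
Proof.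
move=> spP; rewrite -[in LHS]spP -congr_mulmx mulmxV ?sympl_unitmx //.
by rewrite trmx1 mul1mx mulmx1.
Qed.

Lemma congr_sympl_eq (A B N P Q : 'M[R]_n) : Q^T *m J *m Q = J ->
  P^T *m A *m P = N -> Q^T *m B *m Q = N ->
  B = (P *m invmx Q)^T *m A *m (P *m invmx Q).
Proof.
move=> spQ PA QB; rewrite congr_mulmx PA -QB -congr_mulmx.
by rewrite mulmxV ?sympl_unitmx // trmx1 mul1mx mulmx1.
Qed.

End SymplecticGroup.

Lemma ord4P (i : 'I_4) : [\/ i = i0, i = i1, i = i2 | i = i3].
Proof.
by case: i => [[|[|[|[|k]]]] lt_i4] //; [apply: Or41 | apply: Or42 | apply: Or43 | apply: Or44];
  apply: val_inj.
Qed.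

Lemma sum_ord4 (V : nmodType) (F : 'I_4 -> V) :
  \sum_(k < 4) F k = F i0 + F i1 + F i2 + F i3.
Proof.
rewrite !big_ord_recl big_ord0 addr0 !addrA.
by do ! congr (_ + _); congr F; apply: val_inj.
Qed.

Lemma skew_mxE (R : zmodType) n (A : 'M[R]_n) i j : A^T = - A -> A j i = - A i j.
Proof. by move=> /matrixP /(_ i j); rewrite !mxE. Qed.

Lemma skew_mx_diag (R : numDomainType) n (A : 'M[R]_n) i : A^T = - A -> A i i = 0.
Proof. by move=> /(skew_mxE i i) /esym /eqP; rewrite eqNr => /eqP. Qed.

Definition skew4mx (R : zmodType) (a b c d e f : R) : 'M[R]_4 :=
  \matrix_(i, j) match (i : nat), (j : nat) with
  | 0, 1 => a | 0, 2 => b | 0, 3 => c | 1, 2 => d | 1, 3 => e | 2, 3 => f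
  | 1, 0 => - a | 2, 0 => - b | 3, 0 => - c | 2, 1 => - d | 3, 1 => - e | 3, 2 => - f
  | _, _ => 0 end.

Lemma skew4mxE (R : numDomainType) (A : 'M[R]_4) : A^T = - A ->
  A = skew4mx (A i0 i1) (A i0 i2) (A i0 i3) (A i1 i2) (A i1 i3) (A i2 i3).
Proof.
move=> skA; apply/matrixP => i j; rewrite mxE.
by case: (ord4P i) => ->; case: (ord4P j) => -> /=;
  rewrite ?skew_mx_diag // (skew_mxE _ _ skA).
Qed.

Section Jmx.
Variable R : realType.
Local Notation J := (Jmx R).

Lemma trmx_Jmx : J^T = - J.
Proof.
apply/matrixP => i j; rewrite !mxE.
by case: (ord4P i) => ->; case: (ord4P j) => -> /=; rewrite ?oppr0 ?opprK.
Qed.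

Lemma Jmx_mulmx_tr : J *m J^T = 1%:M.
Proof.
apply/matrixP => i j; rewrite !mxE sum_ord4 !mxE.
by case: (ord4P i) => ->; case: (ord4P j) => -> /=; ring.
Qed.

Lemma Jmx_unitmx : J \in unitmx.
Proof. by case: (mulmx1_unit Jmx_mulmx_tr). Qed.

Definition Jop (A : 'M[R]_4) : 'M[R]_4 := J^T *m A.

Lemma Jop_sqr A : A^T = - A -> Jop A *m Jop A = sfun A *: Jop A - Pf A *: 1%:M.
Proof.
move=> skA; rewrite /Jop /sfun /Pf (skew4mxE skA) !mxE /=.
apply/matrixP => i j; rewrite !mxE !sum_ord4 !mxE !sum_ord4 !mxE.
by case: (ord4P i) => ->; case: (ord4P j) => -> /=; ring.
Qed.

Lemma Jmx_mulmx_Jop A : J *m Jop A = A.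
Proof. by rewrite /Jop mulmxA Jmx_mulmx_tr mul1mx. Qed.

Lemma Jop_eigen A (x : 'cV[R]_4) l : Jop A *m x = l *: x -> A *m x = l *: (J *m x).
Proof. by move=> Lx; rewrite -[in LHS](Jmx_mulmx_Jop A) -mulmxA Lx scalemxAr. Qed.

Lemma Jop_nonscalar A l : Pf A < 0 -> exists x : 'cV[R]_4, Jop A *m x - l *: x != 0.
Proof.
move=> Pf_lt0; pose e j : 'cV[R]_4 := delta_mx j 0.
have [j nz_j | Le] := pickP (fun j => Jop A *m e j - l *: e j != 0); first by exists (e j).
have JopA : Jop A = l%:M.
  apply/matrixP => i j; move/negbFE: (Le j); rewrite subr_eq0 -colE.
  by move=> /eqP /matrixP /(_ i 0); rewrite !mxE eqxx andbT mulr_natr.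
have PfA : Pf A = l ^+ 2.
  by rewrite -(Jmx_mulmx_Jop A) JopA mul_mx_scalar /Pf !mxE /=; ring.
by move: Pf_lt0; rewrite PfA ltNge sqr_ge0.
Qed.

Lemma Jop_symplectic_pair A l1 l2 : A^T = - A -> Pf A < 0 ->
  l1 + l2 = sfun A -> l1 * l2 = Pf A -> l1 != l2 ->
  exists u v : 'cV[R]_4,
    [/\ Jop A *m u = l1 *: u, Jop A *m v = l1 *: v & bform J u v = 1].
Proof.
move=> skA Pf_lt0 sum12 prod12 neq12.
have sqL mu nu : mu + nu = sfun A -> mu * nu = Pf A ->
    Jop A *m Jop A = (mu + nu) *: Jop A - (mu * nu) *: 1%:M.
  by move=> -> ->; apply: Jop_sqr.
have sq12 := sqL _ _ sum12 prod12.
have sq21 := sqL l2 l1 (etrans (addrC _ _) sum12) (etrans (mulrC _ _) prod12).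
have [x nz_u] := Jop_nonscalar l2 Pf_lt0.
set u := Jop A *m x - l2 *: x in nz_u.
have Lu : Jop A *m u = l1 *: u by apply: quadratic_eigvec.
(* [y] pairs positively with [u], and so does its [l1]-component [v], because
   its [l2]-component [w] is orthogonal to [u]. *)
pose y := J^T *m u; pose v := Jop A *m y - l2 *: y; pose w := Jop A *m y - l1 *: y.
have Lv : Jop A *m v = l1 *: v by apply: quadratic_eigvec.
have Lw : Jop A *m w = l2 *: w by apply: quadratic_eigvec.
have uw : bform J u w = 0.
  exact: bform_eigen_orth skA trmx_Jmx (Jop_eigen Lu) (Jop_eigen Lw) neq12.
have uy : bform J u y = (u^T *m u) 0 0.
  by rewrite /bform /y mulmxA -(mulmxA u^T) Jmx_mulmx_tr mulmx1.
have uv : bform J u v = (l1 - l2) * (u^T *m u) 0 0.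
  have -> : v = w + (l1 - l2) *: y by rewrite /v /w scalerBl addrA subrK.
  by rewrite bformDr bformZr uw add0r uy.
have nz_uv : bform J u v != 0.
  by rewrite uv mulf_neq0 ?subr_eq0 // lt0r_neq0 // sqnorm_cV_gt0.
exists u, ((bform J u v)^-1 *: v); split => //.
  by rewrite -scalemxAr Lv !scalerA mulrC.
by rewrite bformZr mulVf.
Qed.

Definition cols4 (u1 v1 u2 v2 : 'cV[R]_4) : 'M[R]_4 :=
  \matrix_(i, j) (nth 0 [:: u1; v1; u2; v2] j) i 0.

Lemma col_cols4 u1 v1 u2 v2 j : col j (cols4 u1 v1 u2 v2) = nth 0 [:: u1; v1; u2; v2] j.
Proof. by apply/matrixP => i k; rewrite !mxE ord1. Qed.

Lemma cols4_sympl (u1 v1 u2 v2 : 'cV[R]_4) :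
  bform J u1 v1 = 1 -> bform J u2 v2 = 1 ->
  bform J u1 u2 = 0 -> bform J u1 v2 = 0 -> bform J v1 u2 = 0 -> bform J v1 v2 = 0 ->
  Sp4 (cols4 u1 v1 u2 v2).
Proof.
move=> uv1 uv2 u1u2 u1v2 v1u2 v1v2; apply/matrixP => i j.
have skJ x y : bform J y x = - bform J x y := bform_skew x y trmx_Jmx.
rewrite mulmx_bform !col_cols4 !mxE.
case: (ord4P i) => ->; case: (ord4P j) => -> /=; try by rewrite bform_alt // trmx_Jmx.
all: by rewrite ?[bform _ v1 u1]skJ ?[bform _ u2 u1]skJ ?[bform _ u2 v1]skJ
  ?[bform _ v2 _]skJ ?uv1 ?uv2 ?u1u2 ?u1v2 ?v1u2 ?v1v2 ?oppr0.
Qed.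

Definition normal_form (l1 l2 : R) : 'M[R]_4 :=
  J *m diag_mx (\row_(j < 4) if (j < 2)%N then l1 else l2).

Lemma normal_form_exists A l1 l2 : A^T = - A -> Pf A < 0 ->
  l1 + l2 = sfun A -> l1 * l2 = Pf A ->
  exists P, Sp4 P /\ P^T *m A *m P = normal_form l1 l2.
Proof.
move=> skA Pf_lt0 sum12 prod12.
have neq12 : l1 != l2.
  by apply: contraTneq Pf_lt0 => eq12; rewrite -prod12 eq12 -expr2 -leNgt sqr_ge0.
have [u1 [v1 [Lu1 Lv1 w11]]] := Jop_symplectic_pair skA Pf_lt0 sum12 prod12 neq12.
have neq21 : l2 != l1 by rewrite eq_sym.
have [u2 [v2 [Lu2 Lv2 w22]]] := Jop_symplectic_pair skA Pf_lt0
  (etrans (addrC _ _) sum12) (etrans (mulrC _ _) prod12) neq21.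
have orth x y : Jop A *m x = l1 *: x -> Jop A *m y = l2 *: y -> bform J x y = 0.
  by move=> Lx Ly; apply: bform_eigen_orth skA trmx_Jmx (Jop_eigen Lx) (Jop_eigen Ly) neq12.
set P := cols4 u1 v1 u2 v2.
have spP : Sp4 P by apply: cols4_sympl; rewrite // orth.
exists P; split => //.
have AP : A *m P = J *m P *m diag_mx (\row_(j < 4) if (j < 2)%N then l1 else l2).
  apply: mulmx_eigen_cols => j; rewrite col_cols4 mxE; apply: Jop_eigen.
  by case: (ord4P j) => ->.
by rewrite -mulmxA AP !mulmxA spP.
Qed.

End Jmx.

Theorem lemma4p4 (R : realType) (p q : R) (hp : p < 0) (A B : 'M[R]_4) :
  Aminus p q A -> Aminus p q B ->
  exists P : 'M[R]_4, Sp4 P /\ B = P^T *m A *m P.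
Proof.
move=> [[skA _] [PfA sA]] [[skB _] [PfB sB]]; subst p q.
have [l1 [l2 [sum12 prod12]]] := real_roots_of_neg_prod (sfun A) hp.
have [P [spP PA]] := normal_form_exists skA hp sum12 prod12.
have [Q [spQ QB]] : exists Q, Sp4 Q /\ Q^T *m B *m Q = normal_form l1 l2.
  by apply: normal_form_exists; rewrite ?PfB ?sB.
exists (P *m invmx Q); split.
  exact: sympl_mulmx spP (sympl_invmx (Jmx_unitmx R) spQ).
exact: (congr_sympl_eq (Jmx_unitmx R) spQ PA QB).
Qed.
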